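(* Let $\mathcal{C}$ be a Conway category and $\mathbf{Q}$ a finite automaton. If the identity $\Gamma(\mathbf{Q})$ holds in $\mathcal{C}$, then so does the identity $\Gamma(M(\mathbf{Q}))$ associated with the monoid $M(\mathbf{Q})$.
   Context: Cartesian categories have chosen finite products (terminal object $T$, projections $\pi_i$, tupling $\langle\cdot\rangle$, $!_A:A\to T$, $f\times g$), strictly associative; composition is written $g\circ f$; $\Delta_{A^n}=\langle 1_A,\ldots,1_A\rangle:A\to A^n$. A dagger operation maps $f:A\times C\to A$ to $f^\dagger:C\to A$. A Conway category is a cartesian category with dagger satisfying: $(f\circ(1_A\times g))^\dagger=f^\dagger\circ g$ ($f:A\times B\to A$, $g:C\to B$); $f^{\dagger\dagger}=(f\circ(\Delta_{A^2}\times 1_C))^\dagger$ ($f:A\times A\times C\to A$); $(f\circ\langle g,\pi_2^{A\times C}\rangle)^\dagger=f\circ\langle (g\circ\langle f,\pi_2^{B\times C}\rangle)^\dagger,1_C\rangle$ ($f:B\times C\to A$, $g:A\times C\to B$). A finite automaton $\mathbf{Q}=(Q,Z,\cdot)$ has finite nonempty state set $Q$, finite nonempty input alphabet $Z$ and action $Q\times Z\to Q$, extended to words; $M(\mathbf{Q})$ is the monoid of functions $Q\to Q$, $q\mapsto qu$, induced by words $u\in Z^*$, with product $u^{\mathbf{Q}}\cdot v^{\mathbf{Q}}=(uv)^{\mathbf{Q}}$. Write $Q=\{q_1,\ldots,q_n\}$, identified with $\{1,\ldots,n\}$, and $Z=\{a_1,\ldots,a_m\}$. For an object $A$ and $i\in[n]$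 let $\rho_i^{\mathbf{Q},A}=\langle\pi^{A^n}_{ia_1},\ldots,\pi^{A^n}_{ia_m}\rangle:A^n\to A^m$ ($ia_j$ is the index of $q_i\cdot a_j$). For $f:A^m\times C\to A$ let $f^{\mathbf{Q},A}:A^n\times C\to A^n$ have components $\pi_i^{A^n}\circ f^{\mathbf{Q},A}=f\circ(\rho_i^{\mathbf{Q},A}\times 1_C)$. The identity $\Gamma(\mathbf{Q})$ holds in $\mathcal{C}$ if $(f^{\mathbf{Q},A})^\dagger=\Delta_{A^n}\circ(f\circ(\Delta_{A^m}\times 1_C))^\dagger$ for all objects $A,C$ and all $f:A^m\times C\to A$. For a finite monoid $M$, $\Gamma(M)$ denotes $\Gamma$ of the automaton $(M,M,\cdot)$ whose action is monoid multiplication. *)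

From mathcomp Require Import all_boot.
From mathcomp Require Import boolp.

Set Implicit Arguments.
Unset Strict Implicit.
Unset Printing Implicit Defensive.

Record CartCat := {
  obj : Type;
  hom : obj -> obj -> Type;
  idm : forall A, hom A A;
  comp : forall A B C, hom B C -> hom A B -> hom A C;
  comp_assoc : forall A B C D (h : hom C D) (g : hom B C) (f : hom A B),
      comp h (comp g f) = comp (comp h g) f;
  comp_id_l : forall A B (f : hom A B), comp (idm B) f = f;
  comp_id_r : forall A B (f : hom A B), comp f (idm A) = f;
  term : obj;
  bang : forall A, hom A term;
  bang_unique : forall A (f : hom A term), f = bang A;
  prod : obj -> obj -> obj;
  pi1 : forall A B, hom (prod A B) A;
  pi2 : forall A B, hom (prod A B) B;
  pair : forall C A B, hom C A -> hom C B -> hom C (prod A B);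
  pi1_pair : forall C A B (f : hom C A) (g : hom C B), comp (pi1 A B) (pair f g) = f;
  pi2_pair : forall C A B (f : hom C A) (g : hom C B), comp (pi2 A B) (pair f g) = g;
  pair_eta : forall C A B (h : hom C (prod A B)),
      pair (comp (pi1 A B) h) (comp (pi2 A B) h) = h
}.

Arguments idm {c} A.
Arguments comp {c A B C} g f.
Arguments bang {c} A.
Arguments term {c}.
Arguments prod {c} A B.
Arguments pi1 {c} A B.
Arguments pi2 {c} A B.
Arguments pair {c C A B} f g.

Section CartDefs.
Variable K : CartCat.

Definition pmor (A B A' B' : obj K) (f : hom A A') (g : hom B B') :
    hom (prod A B) (prod A' B') :=
  pair (comp f (pi1 A B)) (comp g (pi2 A B)).

(* Powers A^n := A x (A x (... x T)). Any choice of powers gives the same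
   identities since all notions involved are invariant under canonical iso. *)
Fixpoint pow (A : obj K) (n : nat) : obj K :=
  match n with 0 => term | n'.+1 => prod A (pow A n') end.

Lemma ord0_empty : 'I_0 -> False.
Proof. by case. Qed.

Fixpoint proj (A : obj K) (n : nat) : 'I_n -> hom (pow A n) A :=
  match n return 'I_n -> hom (pow A n) A with
  | 0 => fun i => False_rect _ (ord0_empty i)
  | n'.+1 => fun i =>
      match unlift ord0 i with
      | None => pi1 A (pow A n')
      | Some j => comp (@proj A n' j) (pi2 A (pow A n'))
      end
  end.

Fixpoint tup (A C : obj K) (n : nat) : ('I_n -> hom C A) -> hom C (pow A n) :=
  match n return ('I_n -> hom C A) -> hom C (pow A n) with
  | 0 => fun _ => bang C
  | n'.+1 => fun fs => pair (fs ord0) (@tup A C n' (fun j : 'I_n' => fs (lift ord0 j)))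
  end.

Definition diag (A : obj K) (n : nat) : hom A (pow A n) :=
  @tup A A n (fun _ : 'I_n => idm A).

Definition diag2 (A : obj K) : hom A (prod A A) := pair (idm A) (idm A).

(* canonical associativity map (A x B) x C -> A x (B x C); it is the identity
   in a strictly associative category *)
Definition assoc (A B C : obj K) : hom (prod (prod A B) C) (prod A (prod B C)) :=
  pair (comp (pi1 A B) (pi1 (prod A B) C))
       (pair (comp (pi2 A B) (pi1 (prod A B) C)) (pi2 (prod A B) C)).

End CartDefs.

Arguments pmor {K A B A' B'} f g.
Arguments proj {K A n} i.
Arguments tup {K A C n} fs.
Arguments diag {K} A n.
Arguments diag2 {K} A.
Arguments assoc {K} A B C.

Definition DaggerOp (K : CartCat) :=
  forall (A C : obj K), hom (prod A C) A -> hom C A.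

Record ConwayCat := {
  ccat :> CartCat;
  dagger : DaggerOp ccat;
  conway_param : forall (A B C : obj ccat) (f : hom (prod A B) A) (g : hom C B),
      dagger (comp f (pmor (idm A) g)) = comp (dagger f) g;
  conway_double : forall (A C : obj ccat) (f : hom (prod A (prod A C)) A),
      dagger (dagger f) =
      dagger (comp f (comp (assoc A A C) (pmor (diag2 A) (idm C))));
  conway_composition : forall (A B C : obj ccat)
      (f : hom (prod B C) A) (g : hom (prod A C) B),
      dagger (comp f (pair g (pi2 A C))) =
      comp f (pair (dagger (comp g (pair f (pi2 B C)))) (idm C))
}.

Arguments dagger {c A C} f.

Section Gamma.
Variable K : ConwayCat.
Variables (Q Z : finType) (act : Q -> Z -> Q).

Local Notation n := #|Q|.
Local Notation m := #|Z|.

Definition rho (A : obj K) (i : 'I_n) : hom (pow A n) (pow A m) :=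
  tup (fun j : 'I_m => proj (enum_rank (act (enum_val i) (enum_val j)))).

Definition fQ (A C : obj K) (f : hom (prod (pow A m) C) A) :
    hom (prod (pow A n) C) (pow A n) :=
  tup (fun i : 'I_n => comp f (pmor (rho A i) (idm C))).

Definition Gamma : Prop :=
  forall (A C : obj K) (f : hom (prod (pow A m) C) A),
    dagger (fQ f) = comp (diag A n) (dagger (comp f (pmor (diag A m) (idm C)))).

End Gamma.

Arguments Gamma K {Q Z} act.

Section Monoid.
Variables (Q Z : finType) (act : Q -> Z -> Q).

Definition actw (q : Q) (w : seq Z) : Q := foldl act q w.

Definition induced (f : {ffun Q -> Q}) : Prop :=
  exists w : seq Z, forall q, f q = actw q w.

Definition MQ := {f : {ffun Q -> Q} | `[< induced f >]}.

Lemma induced_mul (x y : MQ) :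
  `[< induced [ffun q => val y (val x q)] >].
Proof.
case: x => f Hf; case: y => g Hg /=.
move/asboolP: Hf => [u Hu]; move/asboolP: Hg => [v Hv].
apply/asboolP; exists (u ++ v) => q.
by rewrite ffunE /actw foldl_cat Hu Hv.
Qed.

(* u^Q . v^Q = (uv)^Q : first apply u, then v *)
Definition mulM (x y : MQ) : MQ := exist (fun f => `[< induced f >]) _ (induced_mul x y).

End Monoid.

(* The action of M(Q) on itself by right multiplication embeds, via s |-> s, into the
   componentwise action of M(Q) on the set Q^Q of functions, so it suffices to prove Gamma for
   the action q.s = s(q) of M(Q) on Q and to know that Gamma passes to subautomata and to finite
   powers of the state set.  Every element of M(Q) is induced by a word of length at most some
   k, so the action of M(Q) on Q is a relabelling of the action of the words of length <= k
   (padded with identity letters).  Gamma holds for the latter by induction on k: adding an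
   identity letter preserves Gamma, and so does letting a letter act as a pair of letters in
   sequence, provided the first alphabet already contains the identity letter and the letters
   of Z.  These closure properties follow from the Conway identities by two transfer principles
   for the dagger along a splitting of the state object into a product. *)

From mathcomp Require Import all_boot.
From mathcomp Require Import boolp.

Set Implicit Arguments.
Unset Strict Implicit.
Unset Printing Implicit Defensive.

Section CartesianCategory.
Variable K : CartCat.
Implicit Types A B C D : obj K.

Lemma pair_ext C A B (h1 h2 : hom C (prod A B)) :
  comp (pi1 A B) h1 = comp (pi1 A B) h2 -> comp (pi2 A B) h1 = comp (pi2 A B) h2 ->
  h1 = h2.
Proof. by move=> e1 e2; rewrite -(pair_eta h1) -(pair_eta h2) e1 e2. Qed.

Lemma comp_pair C D A B (f : hom C A) (g : hom C B) (h : hom D C) :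
  comp (pair f g) h = pair (comp f h) (comp g h).
Proof. by apply: pair_ext; rewrite comp_assoc ?pi1_pair ?pi2_pair. Qed.

Lemma pair_pi A B : pair (pi1 A B) (pi2 A B) = idm (prod A B).
Proof. by apply: pair_ext; rewrite ?pi1_pair ?pi2_pair comp_id_r. Qed.

Lemma pmor_pair C A B A' B' (f : hom A A') (g : hom B B') (h : hom C A) (k : hom C B) :
  comp (pmor f g) (pair h k) = pair (comp f h) (comp g k).
Proof. by rewrite /pmor comp_pair -!comp_assoc pi1_pair pi2_pair. Qed.

Lemma pmor_comp A B A' B' A'' B''
    (f : hom A A') (g : hom B B') (f' : hom A' A'') (g' : hom B' B'') :
  comp (pmor f' g') (pmor f g) = pmor (comp f' f) (comp g' g).
Proof. by rewrite {2}/pmor pmor_pair !comp_assoc. Qed.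

Lemma proj_tup A C n (fs : 'I_n -> hom C A) (j : 'I_n) : comp (proj j) (tup fs) = fs j.
Proof.
elim: n fs j => [|n IHn] fs j; first by case: j.
rewrite /=; case: unliftP => [j' ->|->]; last by rewrite pi1_pair.
by rewrite -comp_assoc pi2_pair IHn.
Qed.

Lemma tup_ext A C n (h1 h2 : hom C (pow A n)) :
  (forall j, comp (proj j) h1 = comp (proj j) h2) -> h1 = h2.
Proof.
elim: n h1 h2 => [|n IHn] h1 h2 eq_h; first by rewrite (bang_unique h1) (bang_unique h2).
apply: pair_ext; first by have := eq_h ord0; rewrite /= unlift_none.
by apply: IHn => j; have := eq_h (lift ord0 j); rewrite /= liftK -!comp_assoc.
Qed.

Definition fpow A (I : finType) := pow A #|I|.
Definition fproj {A} {I : finType} (i : I) : hom (fpow A I) A := proj (enum_rank i).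
Definition ftup {A C} {I : finType} (fs : I -> hom C A) : hom C (fpow A I) :=
  tup (fun j => fs (enum_val j)).

Lemma fproj_ftup A C (I : finType) (fs : I -> hom C A) i : comp (fproj i) (ftup fs) = fs i.
Proof. by rewrite /fproj /ftup proj_tup enum_rankK. Qed.

Lemma fpow_ext A C (I : finType) (h1 h2 : hom C (fpow A I)) :
  (forall i : I, comp (fproj i) h1 = comp (fproj i) h2) -> h1 = h2.
Proof.
by move=> eq_h; apply: tup_ext => j; have := eq_h (enum_val j); rewrite /fproj enum_valK.
Qed.

Lemma ftup_comp A C D (I : finType) (fs : I -> hom C A) (h : hom D C) :
  comp (ftup fs) h = ftup (fun i => comp (fs i) h).
Proof. by apply: fpow_ext => i; rewrite comp_assoc !fproj_ftup. Qed.

End CartesianCategory.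

Arguments fpow {K} A I.
Arguments fproj {K A I} i.
Arguments ftup {K A C I} fs.

Ltac cart_simpl :=
  rewrite /pmor; repeat progress rewrite -?comp_assoc ?comp_pair ?pi1_pair ?pi2_pair
    ?comp_id_l ?comp_id_r ?fproj_ftup ?ftup_comp ?pair_pi.

Section ConwayCategory.
Variable K : ConwayCat.
Implicit Types A C X Y : obj K.

Lemma dagger_fix A C (f : hom (prod A C) A) : dagger f = comp f (pair (dagger f) (idm C)).
Proof.
by have := conway_composition f (pi1 A C); rewrite pair_pi comp_id_r pi1_pair.
Qed.

Lemma dagger_const A C (h : hom C A) : dagger (comp h (pi2 A C)) = h.
Proof. by rewrite dagger_fix -comp_assoc pi2_pair comp_id_r. Qed.

Lemma dagger_diag A C (f : hom (prod A (prod A C)) A) :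
  dagger (comp f (pair (pi1 A C) (idm (prod A C)))) = dagger (dagger f).
Proof.
have -> : pair (pi1 A C) (idm (prod A C)) = comp (assoc A A C) (pmor (diag2 A) (idm C)).
  by rewrite /assoc /diag2; cart_simpl.
by rewrite conway_double.
Qed.

Lemma dagger_section X X' C (i : hom X X') (i' : hom X' X) (G : hom (prod X' C) X') :
  comp i i' = idm X' -> dagger (comp i' (comp G (pmor i (idm C)))) = comp i' (dagger G).
Proof.
move=> ii'; have := conway_composition (comp i' (pi1 X' C)) (comp G (pmor i (idm C))).
have -> : comp (comp i' (pi1 X' C)) (pair (comp G (pmor i (idm C))) (pi2 X C)) =
          comp i' (comp G (pmor i (idm C))) by cart_simpl.
have -> : comp (comp G (pmor i (idm C))) (pair (comp i' (pi1 X' C)) (pi2 X' C)) = G.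
  by cart_simpl; rewrite comp_assoc ii' comp_id_l pair_pi comp_id_r.
by move=> ->; cart_simpl.
Qed.

(* [pr] projects the state object X onto a factor Y, and [gl] replaces the Y-component of its
   second argument by its first. *)
Section SplitStateSpace.
Variables (X Y C : obj K) (pr : hom X Y) (gl : hom (prod Y X) X).
Hypothesis pr_gl : comp pr gl = pi1 Y X.

Lemma dagger_reduce (t : hom Y X) (G : hom (prod X C) X) :
  let w := comp gl (pair (idm Y) t) in
  G = comp gl (pair (comp pr G) (comp t (comp pr (pi1 X C)))) ->
  dagger G = comp w (dagger (comp pr (comp G (pmor w (idm C))))).
Proof.
move=> w eqG; pose P := prod X C.
pose f1 := comp gl (pair (comp pr (comp G (pi2 Y P))) (comp t (pi1 Y P))).
pose g1 := comp pr (pi1 X P).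
have eqG' : G = comp (comp f1 (pair g1 (pi2 X P))) (pair (pi1 X C) (idm P)).
  by rewrite {1}eqG /f1 /g1; cart_simpl.
rewrite [in LHS]eqG' dagger_diag conway_composition.
have -> : comp g1 (pair f1 (pi2 Y P)) = comp (comp pr G) (pi2 Y P).
  by rewrite /g1 /f1; cart_simpl; rewrite comp_assoc pr_gl; cart_simpl.
rewrite dagger_const.
have -> : comp f1 (pair (comp pr G) (idm P)) = comp w (comp pr G) by rewrite /f1 /w; cart_simpl.
have := conway_composition (comp w (pi1 Y C)) (comp pr G).
have -> : comp (comp w (pi1 Y C)) (pair (comp pr G) (pi2 X C)) = comp w (comp pr G).
  by cart_simpl.
by move=> ->; cart_simpl.
Qed.

Hypothesis gl_pr : comp gl (pair pr (idm X)) = idm X.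

Lemma dagger_quotient (G : hom (prod X C) X) (F : hom (prod Y C) Y) :
  comp pr G = comp F (pmor pr (idm C)) -> comp pr (dagger G) = dagger F.
Proof.
move=> eqG; pose P := prod X C.
pose f1 := comp gl (pair (comp F (pair (pi1 Y P) (comp (pi2 X C) (pi2 Y P))))
                         (comp G (pi2 Y P))).
pose g1 := comp pr (pi1 X P).
have -> : G = comp (comp f1 (pair g1 (pi2 X P))) (pair (pi1 X C) (idm P)).
  rewrite /f1 /g1; cart_simpl; rewrite -[pair _ G]comp_id_l -[in LHS](comp_id_l G) -gl_pr.
  by cart_simpl; rewrite eqG; cart_simpl.
rewrite dagger_diag conway_composition.
have -> : comp g1 (pair f1 (pi2 Y P)) = comp F (pmor (idm Y) (pi2 X C)).
  by rewrite /g1 /f1; cart_simpl; rewrite comp_assoc pr_gl; cart_simpl.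
rewrite conway_param dagger_fix /f1; cart_simpl; rewrite comp_assoc pr_gl; cart_simpl.
by rewrite [in RHS]dagger_fix.
Qed.

End SplitStateSpace.
End ConwayCategory.

Section GammaClosure.
Variable K : ConwayCat.
Implicit Types A C : obj K.

Definition frho (Q Z : finType) (act : Q -> Z -> Q) A (q : Q) : hom (fpow A Q) (fpow A Z) :=
  ftup (fun z => fproj (act q z)).

Lemma fproj_fQ (Q Z : finType) (act : Q -> Z -> Q) A C (f : hom (prod (fpow A Z) C) A) q :
  comp (fproj q) (fQ act f) = comp f (pmor (frho act A q) (idm C)).
Proof. by rewrite /fproj /fQ proj_tup /rho enum_rankK. Qed.

Lemma GammaE (Q Z : finType) (act : Q -> Z -> Q) :
  Gamma K act <-> forall A C (f : hom (prod (fpow A Z) C) A),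
    dagger (fQ act f) = comp (ftup (fun _ : Q => idm A))
        (dagger (comp f (pmor (ftup (fun _ : Z => idm A)) (idm C)))).
Proof. by []. Qed.

Lemma Gamma_relabel (Q Z W : finType) (act : Q -> Z -> Q) (act' : Q -> W -> Q) (phi : W -> Z) :
  (forall q w, act' q w = act q (phi w)) -> Gamma K act -> Gamma K act'.
Proof.
move=> act'E /GammaE G; apply/GammaE => A C f.
pose f' := comp f (pmor (ftup (fun w => fproj (phi w)) : hom (fpow A Z) (fpow A W)) (idm C)).
have -> : fQ act' f = fQ act f'.
  apply: fpow_ext => q; rewrite !fproj_fQ /f' -comp_assoc pmor_comp comp_id_l.
  by congr (comp f (pmor _ _)); apply: fpow_ext => w; rewrite /frho; cart_simpl; rewrite act'E.
rewrite G /f' -comp_assoc pmor_comp comp_id_l.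
by congr (comp _ (dagger (comp f (pmor _ _)))); apply: fpow_ext => w; cart_simpl.
Qed.

Lemma Gamma_trivial (P V : finType) (act : P -> V -> P) (p0 : P) :
  (forall p, p = p0) -> Gamma K act.
Proof.
move=> p0E; apply/GammaE => A C f; set F := comp f _.
have -> : fQ act f = comp (ftup (fun _ : P => idm A)) (comp F (pmor (fproj p0) (idm C))).
  apply: fpow_ext => p; rewrite fproj_fQ /F (comp_assoc (fproj p)) fproj_ftup comp_id_l.
  rewrite -comp_assoc pmor_comp comp_id_l; congr (comp f (pmor _ _)).
  by apply: fpow_ext => v; rewrite /frho; cart_simpl; rewrite (p0E (act p v)) -(p0E p).
by rewrite dagger_section // fproj_ftup.
Qed.

Lemma Gamma_prod (Q1 Q2 P V : finType) (act1 : Q1 -> V -> Q1) (act2 : Q2 -> V -> Q2)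
    (act : P -> V -> P) (e : P -> Q1 * Q2) (d : Q1 * Q2 -> P) :
  cancel e d -> cancel d e ->
  (forall p v, e (act p v) = (act1 (e p).1 v, act2 (e p).2 v)) ->
  Gamma K act1 -> Gamma K act2 -> Gamma K act.
Proof.
move=> eK dK eact /GammaE G1 /GammaE G2; apply/GammaE => A C f.
pose B := fpow A Q2.
pose g : hom (prod (fpow B V) C) B :=
  ftup (fun q2 => comp f (pmor (ftup (fun v => comp (fproj (act2 q2 v)) (fproj v))) (idm C))).
pose i : hom (fpow A P) (fpow B Q1) := ftup (fun q1 => ftup (fun q2 => fproj (d (q1, q2)))).
pose i' : hom (fpow B Q1) (fpow A P) := ftup (fun p => comp (fproj (e p).2) (fproj (e p).1)).
have ii' : comp i i' = idm _.
  apply: fpow_ext => q1; apply: fpow_ext => q2; rewrite comp_id_r /i /i'; cart_simpl.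
  by rewrite dK.
have -> : fQ act f = comp i' (comp (fQ act1 g) (pmor i (idm C))).
  apply: fpow_ext => p; rewrite fproj_fQ /i'; cart_simpl.
  rewrite (comp_assoc (fproj (e p).1)) fproj_fQ /g /frho; cart_simpl.
  by congr (comp f (pair _ _)); apply: fpow_ext => v; cart_simpl; rewrite -eact eK.
rewrite dagger_section // G1.
have -> : comp g (pmor (ftup (fun _ : V => idm B)) (idm C)) = fQ act2 f.
  apply: fpow_ext => q2; rewrite fproj_fQ /g /frho; cart_simpl.
  by congr (comp f (pair _ _)); apply: fpow_ext => v; cart_simpl.
rewrite G2 !comp_assoc; congr (comp _ _).
by apply: fpow_ext => p; rewrite /i'; cart_simpl.
Qed.

Lemma Gamma_inj (S P V : finType) (actS : S -> V -> S) (actP : P -> V -> P) (e : S -> P) :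
  injective e -> (forall s v, e (actS s v) = actP (e s) v) -> Gamma K actP -> Gamma K actS.
Proof.
move=> e_inj eact /GammaE G; apply/GammaE => A C f.
pose pr : hom (fpow A P) (fpow A S) := ftup (fun s => fproj (e s)).
pose gl : hom (prod (fpow A S) (fpow A P)) (fpow A P) :=
  ftup (fun p => if [pick s | e s == p] is Some s then comp (fproj s) (pi1 _ _)
                 else comp (fproj p) (pi2 _ _)).
have pr_gl : comp pr gl = pi1 _ _.
  apply: fpow_ext => s; rewrite /pr /gl; cart_simpl.
  case: pickP => [s' /eqP /e_inj -> | /(_ s)]; first by cart_simpl.
  by rewrite eqxx.
have gl_pr : comp gl (pair pr (idm _)) = idm _.
  apply: fpow_ext => p; rewrite /pr /gl comp_id_r; cart_simpl.
  by case: pickP => [s' /eqP <- | _]; cart_simpl.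
have pr_fQ : comp pr (fQ actP f) = comp (fQ actS f) (pmor pr (idm C)).
  apply: fpow_ext => s; rewrite /pr (comp_assoc (fproj s)) fproj_ftup fproj_fQ.
  rewrite (comp_assoc (fproj s)) fproj_fQ -comp_assoc pmor_comp comp_id_l.
  by congr (comp f (pmor _ _)); apply: fpow_ext => v; rewrite /frho; cart_simpl; rewrite eact.
rewrite -(dagger_quotient pr_gl gl_pr pr_fQ) G comp_assoc; congr (comp _ _).
by apply: fpow_ext => s; rewrite /pr; cart_simpl.
Qed.

Definition actF (Q V I : finType) (act : Q -> V -> Q) (x : {ffun I -> Q}) (v : V) :
  {ffun I -> Q} := [ffun i => act (x i) v].

Lemma Gamma_ffun_ord (Q V : finType) (act : Q -> V -> Q) n :
  Gamma K act -> Gamma K (@actF Q V 'I_n act).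
Proof.
move=> G; elim: n => [|n IHn].
  apply: (@Gamma_trivial _ _ _ [ffun i => False_rect _ (ord0_empty i)]).
  by move=> x; apply/ffunP => -[].
pose e (x : {ffun 'I_n.+1 -> Q}) := (x ord0, [ffun i => x (lift ord0 i)]).
pose d (y : Q * {ffun 'I_n -> Q}) : {ffun 'I_n.+1 -> Q} :=
  [ffun i => if unlift ord0 i is Some i' then y.2 i' else y.1].
apply: (@Gamma_prod _ _ _ _ act (@actF Q V 'I_n act) _ e d) => //.
- move=> x; apply/ffunP => i; rewrite /d /e ffunE /=.
  by case: unliftP => [i' ->|->] //; rewrite ffunE.
- move=> [q y]; rewrite /d /e /= ffunE unlift_none; congr (_, _).
  by apply/ffunP => i; rewrite !ffunE liftK.
- by move=> x v; rewrite /e /actF /= !ffunE; congr (_, _); apply/ffunP => i; rewrite !ffunE.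
Qed.

Lemma Gamma_ffun (Q V I : finType) (act : Q -> V -> Q) :
  Gamma K act -> Gamma K (@actF Q V I act).
Proof.
move=> /(Gamma_ffun_ord #|I|).
apply: (Gamma_inj (e := fun x : {ffun I -> Q} => [ffun j : 'I_#|I| => x (enum_val j)])).
  move=> x y /ffunP exy; apply/ffunP => i.
  by have := exy (enum_rank i); rewrite !ffunE enum_rankK.
by move=> x v; apply/ffunP => j; rewrite !ffunE.
Qed.

End GammaClosure.

Definition act_opt (Q Z : finType) (act : Q -> Z -> Q) (q : Q) (o : option Z) : Q :=
  if o is Some z then act q z else q.

Definition act_pair (Q V Z : finType) (act : Q -> Z -> Q) (actV : Q -> V -> Q)
    (q : Q) (vo : V * option Z) : Q :=
  act_opt act (actV q vo.1) vo.2.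

Section GammaWords.
Variable K : ConwayCat.

Lemma Gamma_opt (Q Z : finType) (act : Q -> Z -> Q) :
  Gamma K act -> Gamma K (act_opt act).
Proof.
move=> /GammaE G; apply/GammaE => A C f.
pose X := fpow A Q.
pose Phi : hom (prod X (prod X C)) X := ftup (fun q => comp f (pair (ftup (fun o : option Z =>
   if o is Some z then comp (fproj (act q z)) (comp (pi1 X C) (pi2 X (prod X C)))
   else comp (fproj q) (pi1 X (prod X C))))
   (comp (pi2 X C) (pi2 X (prod X C))))).
have -> : fQ (act_opt act) f = comp Phi (pair (pi1 X C) (idm _)).
  apply: fpow_ext => q; rewrite fproj_fQ /frho /Phi; cart_simpl.
  by congr (comp f (pair _ _)); apply: fpow_ext => -[z|]; cart_simpl.
pose fh : hom (prod A (prod (fpow A Z) C)) A := comp f (pair (ftup (fun o : option Z =>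
   if o is Some z then comp (fproj z) (comp (pi1 (fpow A Z) C) (pi2 A _))
   else pi1 A (prod (fpow A Z) C)))
   (comp (pi2 (fpow A Z) C) (pi2 A _))).
have dagger_Phi : dagger Phi = fQ act (dagger fh).
  apply: fpow_ext => q; rewrite fproj_fQ -conway_param.
  pose gl : hom (prod A X) X :=
    ftup (fun q' => if q' == q then pi1 A X else comp (fproj q') (pi2 A X)).
  have pr_gl : comp (fproj q) gl = pi1 A X by rewrite /gl fproj_ftup eqxx.
  have gl_pr : comp gl (pair (fproj q) (idm X)) = idm X.
    by apply: fpow_ext => q'; rewrite /gl comp_id_r; cart_simpl; case: eqP => [->|_]; cart_simpl.
  apply: (dagger_quotient pr_gl gl_pr).
  rewrite /Phi /fh /frho; cart_simpl.
  by congr (comp f (pair _ _)); apply: fpow_ext => -[z|]; cart_simpl.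
rewrite dagger_diag dagger_Phi G -conway_param -dagger_diag.
congr (comp _ (dagger _)); rewrite /fh; cart_simpl.
by congr (comp f (pair _ _)); apply: fpow_ext => -[z|]; cart_simpl.
Qed.

Lemma Gamma_pair (Q V Z : finType) (act : Q -> Z -> Q) (actV : Q -> V -> Q)
    (letter : option Z -> V) :
  (forall q o, actV q (letter o) = act_opt act q o) -> Gamma K actV ->
  Gamma K (act_pair act actV).
Proof.
move=> actV_letter /GammaE G; apply/GammaE => A C f.
pose B := fpow A (option Z).
pose X := fpow B Q.
pose Y := fpow A Q.
pose g : hom (prod (fpow B V) C) B := ftup (fun o : option Z =>
   if o is Some z then comp (fproj None) (comp (fproj (letter (Some z))) (pi1 (fpow B V) C))
   else comp f (pair (ftup (fun vo : V * option Z =>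
          comp (fproj vo.2) (comp (fproj vo.1) (pi1 (fpow B V) C)))) (pi2 (fpow B V) C))).
pose pr : hom X Y := ftup (fun q => comp (fproj None) (fproj q)).
pose gl : hom (prod Y X) X := ftup (fun q => ftup (fun o : option Z =>
   if o is Some z then comp (fproj (Some z)) (comp (fproj q) (pi2 Y X))
   else comp (fproj q) (pi1 Y X))).
pose t : hom Y X := ftup (fun q => ftup (fun o : option Z => fproj (act_opt act q o))).
have pr_gl : comp pr gl = pi1 Y X by apply: fpow_ext => q; rewrite /pr /gl; cart_simpl.
have gl_t : comp gl (pair (idm Y) t) = t.
  by apply: fpow_ext => q; apply: fpow_ext => -[z|]; rewrite /gl /t; cart_simpl.
have pr_t : comp pr t = idm Y by apply: fpow_ext => q; rewrite /pr /t comp_id_r; cart_simpl.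
have eq_fQ : fQ actV g = comp gl (pair (comp pr (fQ actV g)) (comp t (comp pr (pi1 X C)))).
  apply: fpow_ext => q; apply: fpow_ext => -[z|]; rewrite /gl; cart_simpl => //.
  by rewrite /t /pr; cart_simpl; rewrite fproj_fQ /g /frho; cart_simpl; rewrite actV_letter.
have -> : dagger (fQ (act_pair act actV) f) = comp pr (dagger (fQ actV g)).
  rewrite (dagger_reduce pr_gl eq_fQ) gl_t comp_assoc pr_t comp_id_l.
  congr dagger; apply: fpow_ext => q; rewrite fproj_fQ /pr; cart_simpl.
  rewrite (comp_assoc (fproj q)) fproj_fQ /g /frho; cart_simpl.
  by congr (comp f (pair _ _)); apply: fpow_ext => vo; rewrite /t; cart_simpl.
rewrite G.
pose gl' : hom (prod A B) B := ftup (fun o : option Z =>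
   if o is Some z then comp (fproj (Some z)) (pi2 A B) else pi1 A B).
pose t' : hom A B := ftup (fun _ : option Z => idm A).
have pr_gl' : comp (fproj None) gl' = pi1 A B by rewrite /gl' fproj_ftup.
have gl_t' : comp gl' (pair (idm A) t') = t'.
  by apply: fpow_ext => -[z|]; rewrite /gl' /t'; cart_simpl.
set g1 := comp g (pmor _ (idm C)).
have eq_g1 : g1 = comp gl' (pair (comp (fproj None) g1) (comp t' (comp (fproj None) (pi1 B C)))).
  by apply: fpow_ext => -[z|]; rewrite /gl' /g1; cart_simpl.
rewrite (dagger_reduce pr_gl' eq_g1) gl_t'.
have -> : comp (fproj None) (comp g1 (pmor t' (idm C))) =
          comp f (pmor (ftup (fun _ : V * option Z => idm A)) (idm C)).
  rewrite /g1 /g /t'; cart_simpl.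
  by congr (comp f (pair _ _)); apply: fpow_ext => vo; cart_simpl.
rewrite !comp_assoc; congr (comp _ _).
by apply: fpow_ext => q; rewrite /pr /t'; cart_simpl.
Qed.

End GammaWords.

Section PaddedWords.
Variables (Q Z : finType) (act : Q -> Z -> Q).

(* Words of length at most k.+1 over Z, padded to length k.+1 with the identity letter None. *)
Fixpoint pword (k : nat) : finType :=
  if k is k'.+1 then ((pword k' * option Z)%type : finType) else option Z.

Fixpoint act_pword (k : nat) : Q -> pword k -> Q :=
  if k is k'.+1 then act_pair act (@act_pword k') else act_opt act.

Fixpoint pword_letter (k : nat) : option Z -> pword k :=
  if k is k'.+1 then fun o => (pword_letter k' o, None) else id.

Lemma act_pword_letter k q o : act_pword q (pword_letter k o) = act_opt act q o.
Proof. by elim: k => //= k IHk; rewrite /act_pair /= IHk. Qed.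

Lemma Gamma_pword (K : ConwayCat) k : Gamma K act -> Gamma K (@act_pword k).
Proof.
move=> G; elim: k => [|k IHk] /=; first exact: Gamma_opt.
by apply: (Gamma_pair (letter := @pword_letter k)) => // q o; rewrite act_pword_letter.
Qed.

Lemma pword_of_word k (w : seq Z) :
  size w <= k.+1 -> exists v : pword k, forall q, act_pword q v = actw act q w.
Proof.
elim: k w => [|k IHk] w.
  by case: w => [|z [|? ?]] //= _; [exists None | exists (Some z)].
case/lastP: w => [|w z] size_w.
  by have [v Hv] := IHk [::] isT; exists (v, None) => q; rewrite /= /act_pair /= Hv.
have [v Hv] : exists v : pword k, forall q, act_pword q v = actw act q w.
  by apply: IHk; move: size_w; rewrite size_rcons.
by exists (v, Some z) => q; rewrite /= /act_pair /= Hv /actw foldl_rcons.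
Qed.

End PaddedWords.

Theorem proposition4p2 (K : ConwayCat) (Q Z : finType) (act : Q -> Z -> Q) :
  0 < #|Q| -> 0 < #|Z| ->
  Gamma K act -> Gamma K (@mulM Q Z act).
Proof.
move=> _ _ G.
have word_ex (t : MQ act) : exists w : seq Z, forall q, val t q = actw act q w.
  by apply/asboolP; exact: valP t.
have [word wordP] := choice word_ex.
pose k := \max_t size (word t).
have pword_ex (t : MQ act) : exists v : pword Z k, forall q, act_pword act q v = val t q.
  have size_w : size (word t) <= k.+1 by apply: leq_trans (leq_bigmax t) (leqnSn k).
  by have [v Hv] := pword_of_word act size_w; exists v => q; rewrite Hv wordP.
have [phi phiP] := choice pword_ex.
have G_eval : Gamma K (fun q (t : MQ act) => val t q) :=
  Gamma_relabel (fun q t => esym (phiP t q)) (Gamma_pword (k := k) G).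
apply: (Gamma_inj (e := val) val_inj _ (Gamma_ffun Q G_eval)).
by move=> s t; apply/ffunP => q; rewrite /actF !ffunE.
Qed.
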